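(* Let $x_1,\dots,x_n\in\mathbb{R}^2$ satisfy $x_i\prec x_j$ whenever $i<j$, let $E=\{x_1,\dots,x_n\}$ and $2\le p\le n$. Then the optimal value of the Max-Min $p$-dispersion problem in $E$ equals $$\max_{1\le i_1<\dots<i_p\le n}\ \min_{j\in\{1,\dots,p-1\}}d_{i_j,i_{j+1}},$$ and the optimal value of the Max-Sum-Min $p$-dispersion problem in $E$ equals $$\max_{1\le i_1<\dots<i_p\le n}\ \sum_{j=1}^{p}m_j,\quad\text{where } m_1=d_{i_1,i_2},\ m_p=d_{i_{p-1},i_p},\ m_j=\min(d_{i_j,i_{j+1}},d_{i_j,i_{j-1}})\text{ for }1<j<p.$$
   Context: For $y=(y^1,y^2),z=(z^1,z^2)\in\mathbb{R}^2$ write $y\prec z$ iff $y^1<z^1$ and $y^2>z^2$. Fix $\alpha>0$, let $d$ be the Euclidean distance, and set $d_{ij}=d(x_i,x_j)^\alpha$. Let $D_p$ be the set of $p$-tuples $(z_1,\dots,z_p)\in E^p$ of pairwise distinct points. The Max-Min $p$-dispersion problem is $\max_{(z_1,\dots,z_p)\in D_p}\min_{1\le i<j\le p}d(z_i,z_j)^\alpha$; the Max-Sum-Min $p$-dispersion problem is $\max_{(z_1,\dots,z_p)\in D_p}\sum_{i=1}^{p}\min_{j\ne i}d(z_i,z_j)^\alpha$. *)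

From HB Require Import structures.
From mathcomp Require Import all_boot all_order all_algebra.
From mathcomp Require Import all_classical all_reals all_analysis.
Set Implicit Arguments. Unset Strict Implicit. Unset Printing Implicit Defensive.
Import Order.TTheory GRing.Theory Num.Theory.
Local Open Scope ring_scope.
Local Open Scope ereal_scope.

Section Defs.
Variable R : realType.
Notation pt := (R * R)%type.

Definition prec (y z : pt) : Prop := (y.1 < z.1)%R /\ (z.2 < y.2)%R.

Definition edist (y z : pt) : R :=
  Num.sqrt ((y.1 - z.1) ^+ 2 + (y.2 - z.2) ^+ 2)%R.

Definition dpow (alpha : R) (y z : pt) : R := (edist y z) `^ alpha.

Definition Dp (x : nat -> pt) (n p : nat) (z : nat -> pt) : Prop :=
  (forall k, (k < p)%N -> exists i, (i < n)%N /\ z k = x i) /\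
  (forall k l, (k < p)%N -> (l < p)%N -> k <> l -> z k <> z l).

Definition maxmin_obj (alpha : R) (p : nat) (z : nat -> pt) : \bar R :=
  \big[mine/+oo]_(0 <= i < p) \big[mine/+oo]_(0 <= j < p | (i < j)%N)
     (dpow alpha (z i) (z j))%:E.

Definition maxsummin_obj (alpha : R) (p : nat) (z : nat -> pt) : \bar R :=
  \sum_(0 <= i < p) \big[mine/+oo]_(0 <= j < p | j != i)
     (dpow alpha (z i) (z j))%:E.

Definition is_max_value (T : Type) (P : T -> Prop) (f : T -> \bar R)
    (v : \bar R) : Prop :=
  (exists z, P z /\ f z = v) /\ (forall z, P z -> f z <= v).

(* 0-based strictly increasing index sequences s 0 < ... < s (p-1) < n
   (i.e. 1 <= i_1 < ... < i_p <= n with i_j = s (j-1) + 1) *)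
Definition incr_idx (n p : nat) (s : nat -> nat) : Prop :=
  (forall k, (k.+1 < p)%N -> (s k < s k.+1)%N) /\ (s p.-1 < n)%N.

Definition chain_min (alpha : R) (x : nat -> pt) (p : nat) (s : nat -> nat)
    : \bar R :=
  \big[mine/+oo]_(0 <= j < p.-1) (dpow alpha (x (s j)) (x (s j.+1)))%:E.

Definition chain_m (alpha : R) (x : nat -> pt) (p : nat) (s : nat -> nat)
    (j : nat) : R :=
  if j == 0%N then dpow alpha (x (s 0%N)) (x (s 1%N))
  else if j == p.-1 then dpow alpha (x (s p.-2)) (x (s p.-1))
  else Num.min (dpow alpha (x (s j)) (x (s j.+1)))
               (dpow alpha (x (s j)) (x (s j.-1))).

Definition chain_sum (alpha : R) (x : nat -> pt) (p : nat) (s : nat -> nat)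
    : \bar R :=
  (\sum_(0 <= j < p) chain_m alpha x p s j)%R%:E.

End Defs.

From Pilot Require Import Defs.
From HB Require Import structures.
From mathcomp Require Import all_boot all_order all_algebra.
From mathcomp Require Import all_classical all_reals all_analysis.
From mathcomp Require Import lra zify.
Set Implicit Arguments.
Unset Strict Implicit.
Unset Printing Implicit Defensive.
Import Order.TTheory GRing.Theory Num.Theory.
Local Open Scope ring_scope.

(* Along a chain x_0 < x_1 < ... for the order [prec], both coordinate gaps
   grow with the index gap, so d(x_i, x_k) dominates d(x_i, x_j) and
   d(x_j, x_k) whenever i < j < k.  Both objectives are invariant under
   reordering the tuple, so a tuple of distinct points may be replaced by its
   points listed in increasing index order; on such a sorted tuple the
   smallest pairwise distance is attained by consecutive points, and the
   nearest neighbour of each point is one of its two neighbours in the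
   chain.  The maxima exist because there are finitely many index
   sequences. *)

Section Distance.
Variable R : realType.
Implicit Types (alpha : R) (y z w : R * R).

Lemma edistC y z : Defs.edist y z = Defs.edist z y.
Proof. by rewrite /Defs.edist -(sqrrN (y.1 - z.1)) -(sqrrN (y.2 - z.2)) !opprB. Qed.

Lemma dpowC alpha y z : dpow alpha y z = dpow alpha z y.
Proof. by rewrite /dpow edistC. Qed.

Lemma prec_irrefl y : ~ prec y y.
Proof. by case; rewrite ltxx. Qed.

Lemma ler_dpow alpha y z y' z' : 0 < alpha ->
  Defs.edist y z <= Defs.edist y' z' -> dpow alpha y z <= dpow alpha y' z'.
Proof.
move=> alpha_gt0 le_d.
by apply: ge0_ler_powR; rewrite ?nnegrE ?sqrtr_ge0 // ltW.
Qed.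

Lemma edist_prec_le_right y z w :
  prec y z -> prec z w -> Defs.edist y z <= Defs.edist y w.
Proof.
case: y z w => [y1 y2] [z1 z2] [w1 w2] [/= ? ?] [/= ? ?].
rewrite /Defs.edist /= ler_sqrt ?addr_ge0 ?sqr_ge0 //; nra.
Qed.

Lemma edist_prec_le_left y z w :
  prec y z -> prec z w -> Defs.edist z w <= Defs.edist y w.
Proof.
case: y z w => [y1 y2] [z1 z2] [w1 w2] [/= ? ?] [/= ? ?].
rewrite /Defs.edist /= ler_sqrt ?addr_ge0 ?sqr_ge0 //; nra.
Qed.

End Distance.

Section IncreasingIndices.
Variables n p : nat.
Implicit Type s : nat -> nat.

Lemma incr_idx_lt s : incr_idx n p s ->
  forall i j, (i < j)%N -> (j < p)%N -> (s i < s j)%N.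
Proof.
case=> s_step _ i j; elim: j => // j IHj.
rewrite ltnS leq_eqVlt => /predU1P[<- | ij] jp; first exact: s_step.
exact: ltn_trans (IHj ij (ltnW jp)) (s_step _ jp).
Qed.

Lemma incr_idx_bound s : incr_idx n p s -> forall k, (k < p)%N -> (s k < n)%N.
Proof.
move=> s_incr k kp; have [_ last_n] := s_incr.
case: (ltngtP k p.-1) => [k_lt | | ->] //; last lia.
have sk_lt : (s k < s p.-1)%N by apply: (incr_idx_lt s_incr k_lt); lia.
exact: ltn_trans sk_lt last_n.
Qed.

Lemma incr_idx_inj s : incr_idx n p s -> {in gtn p &, injective s}.
Proof.
move=> s_incr i j; rewrite !inE => ip jp sij.
case: (ltngtP i j) => // [ij | ji].
- by have := incr_idx_lt s_incr ij jp; rewrite sij ltnn.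
- by have := incr_idx_lt s_incr ji ip; rewrite sij ltnn.
Qed.

Lemma incr_idx_ext s s' : (0 < p)%N -> (forall k, (k < p)%N -> s k = s' k) ->
  incr_idx n p s -> incr_idx n p s'.
Proof.
move=> p_gt0 ss' [s_step last_n]; split; last by rewrite -ss' //; lia.
by move=> k kp; rewrite -!ss' ?s_step //; lia.
Qed.

Lemma incr_idx_id : (0 < p)%N -> (p <= n)%N -> incr_idx n p id.
Proof. by move=> p_gt0 pn; split => //=; lia. Qed.

Lemma sort_indices (f : nat -> nat) : (0 < p)%N ->
  (forall k, (k < p)%N -> (f k < n)%N) -> {in gtn p &, injective f} ->
  exists2 s, incr_idx n p s & perm_eq (map f (iota 0 p)) (map s (iota 0 p)).
Proof.
move=> p_gt0 f_n f_inj; pose t := sort leq (map f (iota 0 p)).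
have size_t : size t = p by rewrite size_sort size_map size_iota.
have t_n b : b \in t -> (b < n)%N.
  by rewrite mem_sort => /mapP[k]; rewrite mem_iota add0n => /andP[_ /f_n] ? ->.
have t_sorted : sorted ltn t.
  rewrite ltn_sorted_uniq_leq sort_uniq sort_sorted ?andbT; last exact: leq_total.
  rewrite map_inj_in_uniq ?iota_uniq // => i j; rewrite !mem_iota !add0n.
  by move=> /andP[_ ip] /andP[_ jp]; apply: f_inj.
exists (nth 0%N t).
  split; first by move=> k kp; apply: (sortedP 0%N t_sorted); rewrite size_t.
  by apply: t_n; rewrite mem_nth // size_t; lia.
have -> : map (nth 0%N t) (iota 0 p) = t.
  by rewrite -[in LHS]size_t; apply: mkseq_nth.
by rewrite perm_sym perm_sort.
Qed.

Lemma incr_idx_argmax (d : Order.disp_t) (T : orderType d)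
    (G : (nat -> nat) -> T) : (0 < p)%N -> (p <= n)%N ->
  (forall s s', incr_idx n p s -> incr_idx n p s' ->
     (forall k, (k < p)%N -> s k = s' k) -> G s = G s') ->
  exists2 s0, incr_idx n p s0 & forall s, incr_idx n p s -> (G s <= G s0)%O.
Proof.
move=> p_gt0 pn G_ext.
(* Maximise over the finite type of maps [0, p) -> [0, n), extended by 0. *)
pose ext (t : {ffun 'I_p -> 'I_n}) k :=
  if insub k is Some i then val (t i) else 0%N.
have ext_onto s : incr_idx n p s -> exists t, forall k, (k < p)%N -> s k = ext t k.
  move=> s_incr.
  exists [ffun i : 'I_p => Ordinal (incr_idx_bound s_incr (ltn_ord i))].
  by move=> k kp; rewrite /ext insubT ffunE.
pose Q t := `[< incr_idx n p (ext t) >].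
have [t0 t0E] := ext_onto _ (incr_idx_id p_gt0 pn).
have Q_t0 : Q t0.
  by apply/asboolP; apply: incr_idx_ext p_gt0 t0E (incr_idx_id p_gt0 pn).
case: (arg_maxP (fun t => G (ext t)) Q_t0) => tm /asboolP tm_incr tm_max.
exists (ext tm) => // s s_incr; have [t tE] := ext_onto _ s_incr.
have t_incr : incr_idx n p (ext t) by apply: incr_idx_ext p_gt0 tE s_incr.
by rewrite (G_ext _ _ s_incr t_incr tE); apply: tm_max; apply/asboolP.
Qed.

End IncreasingIndices.

Lemma big_distinct_pairs_perm (T : Type) (idx idx' : T)
    (op : Monoid.com_law idx) (op' : Monoid.com_law idx')
    (F : nat -> nat -> T) (p : nat) (f g : nat -> nat) :
  {in gtn p &, injective f} -> {in gtn p &, injective g} ->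
  perm_eq (map f (iota 0 p)) (map g (iota 0 p)) ->
  \big[op/idx]_(0 <= i < p) \big[op'/idx']_(0 <= j < p | j != i) F (f i) (f j) =
  \big[op/idx]_(0 <= i < p) \big[op'/idx']_(0 <= j < p | j != i) F (g i) (g j).
Proof.
move=> f_inj g_inj fg.
pose G b := \big[op'/idx']_(c <- map g (iota 0 p) | c != b) F b c.
have inner h : {in gtn p &, injective h} ->
    perm_eq (map h (iota 0 p)) (map g (iota 0 p)) -> forall i, (i < p)%N ->
  \big[op'/idx']_(0 <= j < p | j != i) F (h i) (h j) = G (h i).
  move=> h_inj hg i ip; rewrite /G -(perm_big _ hg) big_map /index_iota subn0.
  rewrite big_seq_cond [RHS]big_seq_cond; apply: eq_bigl => j.
  rewrite mem_iota add0n; case: (ltnP j p) => jp; rewrite ?andbF //=.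
  by rewrite (inj_in_eq h_inj).
transitivity (\big[op/idx]_(0 <= i < p) G (f i)).
  by apply: eq_big_nat => i /andP[_ ip]; apply: inner.
transitivity (\big[op/idx]_(0 <= i < p) G (g i)); last first.
  by apply: eq_big_nat => i /andP[_ ip]; rewrite inner.
rewrite /index_iota subn0 -(big_map f xpredT G) -(big_map g xpredT G).
exact: perm_big.
Qed.

Lemma le_bigmine_nat (R : realDomainType) (c : \bar R) m k (P : pred nat)
    (F : nat -> \bar R) : (forall i, (m <= i < k)%N -> P i -> (c <= F i)%E) ->
  (c <= \big[mine/+oo]_(m <= i < k | P i) F i)%E.
Proof.
move=> le_cF; rewrite big_nat_cond.
by apply: le_bigmin => [|i /andP[]]; [exact: leey | exact: le_cF].
Qed.

Section Objectives.
Variables (R : realType) (alpha : R) (p : nat).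
Implicit Type z : nat -> R * R.
Local Open Scope ereal_scope.

Lemma maxmin_obj_le z i j : (i < j)%N -> (j < p)%N ->
  maxmin_obj alpha p z <= (dpow alpha (z i) (z j))%:E.
Proof.
move=> ij jp; apply: (bigmin_inf_seq _ i) => //.
  by rewrite mem_index_iota (ltn_trans ij jp).
by apply: (ge_bigmin_seq _ j); rewrite ?mem_index_iota.
Qed.

Lemma maxmin_obj_distinct z : maxmin_obj alpha p z =
  \big[mine/+oo]_(0 <= i < p) \big[mine/+oo]_(0 <= j < p | j != i)
     (dpow alpha (z i) (z j))%:E.
Proof.
apply/le_anti/andP; split.
- apply: le_bigmine_nat => i /andP[_ ip] _.
  apply: le_bigmine_nat => j /andP[_ jp] ji.
  case: (ltngtP i j) ji => // [ij | ji] _; first exact: maxmin_obj_le.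
  by rewrite dpowC; exact: maxmin_obj_le.
- rewrite /maxmin_obj; apply: le_bigmine_nat => i /andP[_ ip] _.
  apply: le_bigmine_nat => j /andP[_ jp] ij.
  apply: (bigmin_inf_seq _ i) => //; first by rewrite mem_index_iota.
  by apply: (ge_bigmin_seq _ j); rewrite ?mem_index_iota // neq_ltn ij orbT.
Qed.

Lemma maxmin_obj_ext z z' : (forall k, (k < p)%N -> z k = z' k) ->
  maxmin_obj alpha p z = maxmin_obj alpha p z'.
Proof.
move=> zz'; apply: eq_big_nat => i /andP[_ ip].
rewrite big_nat_cond [RHS]big_nat_cond.
by apply: eq_bigr => j /andP[/andP[_ jp] _]; rewrite !zz'.
Qed.

Lemma maxsummin_obj_ext z z' : (forall k, (k < p)%N -> z k = z' k) ->
  maxsummin_obj alpha p z = maxsummin_obj alpha p z'.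
Proof.
move=> zz'; apply: eq_big_nat => i /andP[_ ip].
rewrite big_nat_cond [RHS]big_nat_cond.
by apply: eq_bigr => j /andP[/andP[_ jp] _]; rewrite !zz'.
Qed.

Lemma maxmin_obj_perm (x : nat -> R * R) (f g : nat -> nat) :
  {in gtn p &, injective f} -> {in gtn p &, injective g} ->
  perm_eq (map f (iota 0 p)) (map g (iota 0 p)) ->
  maxmin_obj alpha p (fun k => x (f k)) =
  maxmin_obj alpha p (fun k => x (g k)).
Proof.
rewrite !maxmin_obj_distinct.
exact: (big_distinct_pairs_perm _ _ (fun a b => (dpow alpha (x a) (x b))%:E)).
Qed.

Lemma maxsummin_obj_perm (x : nat -> R * R) (f g : nat -> nat) :
  {in gtn p &, injective f} -> {in gtn p &, injective g} ->
  perm_eq (map f (iota 0 p)) (map g (iota 0 p)) ->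
  maxsummin_obj alpha p (fun k => x (f k)) =
  maxsummin_obj alpha p (fun k => x (g k)).
Proof.
exact: (big_distinct_pairs_perm _ _ (fun a b => (dpow alpha (x a) (x b))%:E)).
Qed.

End Objectives.

Section PrecChain.
Variables (R : realType) (n : nat) (x : nat -> R * R).
Hypothesis x_prec : forall i j, (i < j)%N -> (j < n)%N -> prec (x i) (x j).

Lemma x_inj i j : (i < n)%N -> (j < n)%N -> x i = x j -> i = j.
Proof.
move=> ilt jlt xij; case: (ltngtP i j) => // [ij | ji].
- by have := x_prec ij jlt; rewrite xij => /prec_irrefl.
- by have := x_prec ji ilt; rewrite xij => /prec_irrefl.
Qed.

Lemma incr_idx_Dp p s : incr_idx n p s -> Dp x n p (fun k => x (s k)).
Proof.
move=> s_incr; split=> [k kp | k l kp lp kl xkl].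
  by exists (s k); split => //; apply: (incr_idx_bound s_incr kp).
apply: kl; apply: (incr_idx_inj s_incr); rewrite ?inE //.
exact: x_inj (incr_idx_bound s_incr kp) (incr_idx_bound s_incr lp) xkl.
Qed.

Lemma Dp_index_map p z : Dp x n p z -> exists f : nat -> nat,
  [/\ forall k, (k < p)%N -> (f k < n)%N, {in gtn p &, injective f}
    & forall k, (k < p)%N -> z k = x (f k)].
Proof.
case=> z_in z_distinct.
have /choice[f fP] : forall k, exists i, (k < p)%N -> (i < n)%N /\ z k = x i.
  move=> k; case: (ltnP k p) => [/z_in[i] | pk]; first by exists i.
  by exists 0%N => kp; exfalso; lia.
exists f; split => [k /fP[] // | k l | k /fP[] //].
rewrite !inE => kp lp fkl; case: (eqVneq k l) => // /eqP kl; exfalso.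
by apply: (z_distinct k l kp lp kl); rewrite (fP k kp).2 (fP l lp).2 fkl.
Qed.

Lemma dispersion_max_value p (F : (nat -> R * R) -> \bar R)
    (G : (nat -> nat) -> \bar R) : (0 < p)%N -> (p <= n)%N ->
  (forall z z', (forall k, (k < p)%N -> z k = z' k) -> F z = F z') ->
  (forall f g, {in gtn p &, injective f} -> {in gtn p &, injective g} ->
     perm_eq (map f (iota 0 p)) (map g (iota 0 p)) ->
     F (fun k => x (f k)) = F (fun k => x (g k))) ->
  (forall s, incr_idx n p s -> F (fun k => x (s k)) = G s) ->
  exists v, is_max_value (Dp x n p) F v /\ is_max_value (incr_idx n p) G v.
Proof.
move=> p_gt0 pn F_ext F_perm FG.
have [s0 s0_incr s0_max] : exists2 s0, incr_idx n p s0 &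
    forall s, incr_idx n p s -> (G s <= G s0)%O.
  apply: incr_idx_argmax => // s s' s_incr s'_incr ss'.
  by rewrite -FG // -FG //; apply: F_ext => k kp; rewrite ss'.
exists (G s0); split; split.
- by exists (fun k => x (s0 k)); split; [exact: incr_idx_Dp | exact: FG].
- move=> z /Dp_index_map[f [f_n f_inj zf]].
  have [s s_incr fs] := sort_indices p_gt0 f_n f_inj.
  rewrite (F_ext _ _ zf) (F_perm _ _ f_inj (incr_idx_inj s_incr) fs) FG //.
  exact: s0_max.
- by exists s0.
- exact: s0_max.
Qed.

End PrecChain.

Section NeighbourDistances.
Variables (R : realType) (alpha : R) (x : nat -> R * R) (p : nat) (s : nat -> nat).
Local Notation D a b := (dpow alpha (x a) (x b)).
Local Notation m := (chain_m alpha x p s).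

Lemma chain_m_le_pred k : (0 < k)%N -> (k < p)%N -> m k <= D (s k) (s k.-1).
Proof.
move=> k_gt0 kp; rewrite /chain_m gtn_eqF //.
case: ifP => [/eqP -> | _]; first by rewrite dpowC lexx.
by rewrite ge_min lexx orbT.
Qed.

Lemma chain_m_le_succ k : (k.+1 < p)%N -> m k <= D (s k) (s k.+1).
Proof.
move=> kp; rewrite /chain_m; case: ifP => [/eqP -> | _]; first exact: lexx.
have -> : (k == p.-1) = false by apply/eqP; lia.
by rewrite ge_min lexx.
Qed.

Lemma le_chain_m (c : \bar R) k : (1 < p)%N -> (k < p)%N ->
  ((0 < k)%N -> (c <= (D (s k) (s k.-1))%:E)%E) ->
  ((k.+1 < p)%N -> (c <= (D (s k) (s k.+1))%:E)%E) ->
  (c <= (m k)%:E)%E.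
Proof.
move=> p_gt1 kp le_pred le_succ; rewrite /chain_m.
case: ifP => [/eqP k0 | /negbT k_neq0]; first by subst k; apply: le_succ.
have k_gt0 : (0 < k)%N by rewrite lt0n.
case: ifP => [/eqP kp1 | /negbT kp1]; first by rewrite dpowC -kp1; apply: le_pred.
have ksp : (k.+1 < p)%N by lia.
by rewrite EFin_min le_min le_pred ?le_succ.
Qed.

End NeighbourDistances.

Section OrderedPoints.
Variables (R : realType) (alpha : R) (n : nat) (x : nat -> R * R).
Hypothesis alpha_gt0 : 0 < alpha.
Hypothesis x_prec : forall i j, (i < j)%N -> (j < n)%N -> prec (x i) (x j).
Local Notation D a b := (dpow alpha (x a) (x b)).

Lemma dpow_le_right a b c : (a < b)%N -> (b <= c)%N -> (c < n)%N -> D a b <= D a c.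
Proof.
move=> ab; rewrite leq_eqVlt => /predU1P[-> // | bc] cn.
apply: ler_dpow => //.
exact: edist_prec_le_right (x_prec ab (ltn_trans bc cn)) (x_prec bc cn).
Qed.

Lemma dpow_le_left a b c : (a <= b)%N -> (b < c)%N -> (c < n)%N -> D b c <= D a c.
Proof.
rewrite leq_eqVlt => /predU1P[-> // | ab] bc cn.
apply: ler_dpow => //.
exact: edist_prec_le_left (x_prec ab (ltn_trans bc cn)) (x_prec bc cn).
Qed.

Section IncreasingChain.
Variables (p : nat) (s : nat -> nat).
Hypothesis s_incr : incr_idx n p s.
Local Open Scope ereal_scope.

Let s_lt := incr_idx_lt s_incr.

Let s_le i j : (i <= j)%N -> (j < p)%N -> (s i <= s j)%N.
Proof. by rewrite leq_eqVlt => /predU1P[-> // | ij] jp; rewrite ltnW ?s_lt. Qed.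

Let s_bound := incr_idx_bound s_incr.

Lemma chain_min_le_dpow u v : (u < v)%N -> (v < p)%N ->
  chain_min alpha x p s <= (D (s u) (s v))%:E.
Proof.
move=> uv vp; apply: (bigmin_inf_seq _ u) => //.
  by rewrite mem_index_iota; lia.
rewrite lee_fin.
by apply: dpow_le_right; [apply: s_lt | apply: s_le | apply: s_bound]; lia.
Qed.

Lemma maxmin_obj_incr :
  maxmin_obj alpha p (fun k => x (s k)) = chain_min alpha x p s.
Proof.
apply/le_anti/andP; split.
- apply: le_bigmine_nat => j /andP[_ jp] _.
  by apply: maxmin_obj_le; lia.
- rewrite /maxmin_obj; apply: le_bigmine_nat => i /andP[_ ip] _.
  apply: le_bigmine_nat => j /andP[_ jp] ij.
  exact: chain_min_le_dpow.
Qed.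

Lemma nearest_chain_m k : (1 < p)%N -> (k < p)%N ->
  \big[mine/+oo]_(0 <= j < p | j != k) (D (s k) (s j))%:E =
  (chain_m alpha x p s k)%:E.
Proof.
move=> p_gt1 kp; apply/le_anti/andP; split.
  apply: le_chain_m => // [k_gt0 | ksp]; apply: (ge_bigmin_seq _ _) => //.
  - by rewrite mem_index_iota; lia.
  - by rewrite neq_ltn; lia.
  - by rewrite mem_index_iota; lia.
  - by rewrite neq_ltn; lia.
apply: le_bigmine_nat => j /andP[_ jp] jk.
rewrite lee_fin; case: (ltngtP j k) jk => // [jk | kj] _.
- have k_gt0 : (0 < k)%N by lia.
  apply: le_trans (chain_m_le_pred alpha x s k_gt0 kp) _.
  rewrite dpowC [leRHS]dpowC.
  by apply: dpow_le_left; [apply: s_le | apply: s_lt | apply: s_bound]; lia.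
- have ksp : (k.+1 < p)%N by lia.
  apply: le_trans (chain_m_le_succ alpha x s ksp) _.
  by apply: dpow_le_right; [apply: s_lt | apply: s_le | apply: s_bound]; lia.
Qed.

Lemma maxsummin_obj_incr : (1 < p)%N ->
  maxsummin_obj alpha p (fun k => x (s k)) = chain_sum alpha x p s.
Proof.
move=> p_gt1; rewrite /maxsummin_obj /chain_sum -sumEFin.
by apply: eq_big_nat => k /andP[_ kp]; apply: nearest_chain_m.
Qed.

End IncreasingChain.

End OrderedPoints.

Theorem proposition3 (R : realType) (alpha : R) (n p : nat)
  (x : nat -> R * R) :
  0 < alpha ->
  (forall i j, (i < j)%N -> (j < n)%N -> prec (x i) (x j)) ->
  (2 <= p)%N -> (p <= n)%N ->
  (exists v : \bar R,
     is_max_value (Dp x n p) (maxmin_obj alpha p) v /\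
     is_max_value (incr_idx n p) (chain_min alpha x p) v) /\
  (exists v : \bar R,
     is_max_value (Dp x n p) (maxsummin_obj alpha p) v /\
     is_max_value (incr_idx n p) (chain_sum alpha x p) v).
Proof.
move=> alpha_gt0 x_prec p_gt1 pn; have p_gt0 : (0 < p)%N by exact: ltnW.
split; apply: (dispersion_max_value x_prec p_gt0 pn).
- exact: maxmin_obj_ext.
- exact: maxmin_obj_perm.
- by move=> s s_incr; apply: (maxmin_obj_incr alpha_gt0 x_prec).
- exact: maxsummin_obj_ext.
- exact: maxsummin_obj_perm.
- by move=> s s_incr; apply: (maxsummin_obj_incr alpha_gt0 x_prec).
Qed.
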